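(* Let $\{\gamma_k\}$ and $\{\lambda_k\}$ be positive non-increasing sequences, let $r<1$, and let $\{\bar x_N\}$ be generated by the IR-IG method. Let $M_h,M$ be scalars with $|h(x)|\le M_h$ and $\|x\|\le M$ for all $x\in X$. Then for all $N\ge1$, $$f(\bar x_N)-f^*\le\Big(\sum_{k=0}^{N-1}\gamma_k^r\Big)^{-1}\Big(m\sum_{k=0}^{N-1}\gamma_k^{r+1}(C_f^2+\lambda_k^2C_h^2)+m^2C_f\sum_{k=0}^{N-1}\gamma_k^{r+1}(C_f+\lambda_kC_h)+2M_h\sum_{k=0}^{N-1}\gamma_k^r\lambda_k+2M^2\gamma_{N-1}^{r-1}\Big).$$
   Context: Standing setup: $X\subset\mathbb{R}^n$ is nonempty, compact and convex. $f_1,\dots,f_m:\mathbb{R}^n\to\mathbb{R}$ are convex (possibly nondifferentiable) functions and $f=\sum_{i=1}^m f_i$. $h:\mathbb{R}^n\to\mathbb{R}$ is strongly convex with parameter $\mu_h>0$ (possibly nondifferentiable). Let $f^*=\min_{x\in X}f(x)$. $C_f,C_h$ are constants such that $\|g\|\le C_f$ for every $g\in\partial f_i(x)$, $i=1,\dots,m$, $x\in X$, and $\|g\|\le C_h$ for every $g\in\partial h(x)$, $x\in X$. $\mathcal{P}_X$ denotes Euclidean projection onto $X$. IR-IG method: given $x_0\in X$, positive sequences $\{\gamma_k\}$, $\{\lambda_k\}$ and a constant $r<1$, for each $k\ge0$ set $x_{k,0}=x_k$; for $i=0,\dots,m-1$ pick any $g_{f_{i+1}}(x_{k,i})\in\partial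 f_{i+1}(x_{k,i})$ and $g_h(x_{k,i})\in\partial h(x_{k,i})$ and set $x_{k,i+1}=\mathcal{P}_X\big(x_{k,i}-\gamma_k\big(g_{f_{i+1}}(x_{k,i})+\tfrac{\lambda_k}{m}g_h(x_{k,i})\big)\big)$; then set $x_{k+1}=x_{k,m}$. The averaged iterates are $\bar x_N=\sum_{k=0}^{N-1}\gamma_k^r x_k\big/\sum_{k=0}^{N-1}\gamma_k^r$ for $N\ge1$. *)

From Stdlib Require Import Reals Lra Lia.
From Stdlib Require Vectors.Fin.
Open Scope R_scope.

Definition vec (n : nat) : Type := Fin.t n -> R.

Fixpoint fsum (n : nat) : (Fin.t n -> R) -> R :=
  match n return (Fin.t n -> R) -> R with
  | O => fun _ => 0
  | S k => fun v => v Fin.F1 + fsum k (fun i => v (Fin.FS i))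
  end.

Definition vadd {n} (x y : vec n) : vec n := fun i => x i + y i.
Definition vsub {n} (x y : vec n) : vec n := fun i => x i - y i.
Definition vscal {n} (a : R) (x : vec n) : vec n := fun i => a * x i.
Definition vzero {n} : vec n := fun _ => 0.
Definition inner {n} (x y : vec n) : R := fsum n (fun i => x i * y i).
Definition norm {n} (x : vec n) : R := sqrt (inner x x).

Fixpoint rsum (N : nat) (a : nat -> R) : R :=
  match N with O => 0 | S k => rsum k a + a k end.
Fixpoint vsum {n} (N : nat) (v : nat -> vec n) : vec n :=
  match N with O => vzero | S k => vadd (vsum k v) (v k) end.

Definition convex_set {n} (X : vec n -> Prop) : Prop :=
  forall x y t, X x -> X y -> 0 <= t <= 1 ->
    X (vadd (vscal t x) (vscal (1 - t) y)).

Definition converges_to {n} (u : nat -> vec n) (l : vec n) : Prop :=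
  forall eps, eps > 0 -> exists N, forall k, (N <= k)%nat -> norm (vsub (u k) l) < eps.

(* sequential compactness (equivalent to compactness in R^n) *)
Definition compact_set {n} (X : vec n -> Prop) : Prop :=
  forall u : nat -> vec n, (forall k, X (u k)) ->
    exists (phi : nat -> nat) (l : vec n),
      (forall k, (phi k < phi (S k))%nat) /\ X l /\ converges_to (fun k => u (phi k)) l.

Definition convex_fun {n} (f : vec n -> R) : Prop :=
  forall x y t, 0 <= t <= 1 ->
    f (vadd (vscal t x) (vscal (1 - t) y)) <= t * f x + (1 - t) * f y.

Definition strongly_convex {n} (f : vec n -> R) (mu : R) : Prop :=
  forall x y t, 0 <= t <= 1 ->
    f (vadd (vscal t x) (vscal (1 - t) y))
      <= t * f x + (1 - t) * f y - mu / 2 * t * (1 - t) * (norm (vsub x y))^2.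

Definition subgrad {n} (f : vec n -> R) (x g : vec n) : Prop :=
  forall y, f y >= f x + inner g (vsub y x).

Definition is_proj {n} (X : vec n -> Prop) (x p : vec n) : Prop :=
  X p /\ forall y, X y -> norm (vsub x p) <= norm (vsub x y).

(* For any [y] in [X], nonexpansiveness of the projection gives for one sub-iteration
   |x_{k,i+1} - y|^2 <= |x_{k,i} - y|^2 - 2 gamma_k <d, x_{k,i} - y> + gamma_k^2 |d|^2,
   and the subgradient inequalities bound <d, x_{k,i} - y> below by
   f_{i+1}(x_{k,i}) - f_{i+1}(y) - 2 (lambda_k / m) M_h.  Bounded subgradients make each f_{i+1}
   Lipschitz on X, so x_{k,i} may be replaced by the cycle start x_k at the price of the drift
   m gamma_k (C_f + lambda_k C_h).  Summing over a cycle,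
   2 gamma_k (f(x_k) - f(y)) <= D_k - D_{k+1} + O(gamma_k^2) + 4 gamma_k lambda_k M_h
   with D_k = |x_k - y|^2.  Multiplying by gamma_k^(r-1) / 2, which is nondecreasing because
   r < 1, the distance terms form an Abel sum bounded by 2 M^2 gamma_{N-1}^(r-1), and Jensen's
   inequality passes to the weighted average. *)

From Stdlib Require Import Reals Lra Lia Psatz Classical FunctionalExtensionality.
Open Scope R_scope.

Lemma vec_ext {n} (u v : vec n) : (forall i, u i = v i) -> u = v.
Proof. intros; apply functional_extensionality; auto. Qed.

Lemma fsum_ext n (u v : Fin.t n -> R) : (forall i, u i = v i) -> fsum n u = fsum n v.
Proof.
  revert u v; induction n; simpl; intros u v H; auto.
  rewrite H, (IHn (fun i => u (Fin.FS i)) (fun i => v (Fin.FS i))); auto.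
Qed.

Lemma fsum_plus n (u v : Fin.t n -> R) : fsum n (fun i => u i + v i) = fsum n u + fsum n v.
Proof. revert u v; induction n; simpl; intros u v; [lra|]. rewrite IHn; ring. Qed.

Lemma fsum_scal n c (u : Fin.t n -> R) : fsum n (fun i => c * u i) = c * fsum n u.
Proof. revert u; induction n; simpl; intros u; [lra|]. rewrite IHn; ring. Qed.

Lemma fsum_nonneg n (u : Fin.t n -> R) : (forall i, 0 <= u i) -> 0 <= fsum n u.
Proof.
  revert u; induction n; simpl; intros u H; [lra|].
  pose proof (IHn (fun i => u (Fin.FS i)) (fun i => H (Fin.FS i))). pose proof (H Fin.F1). lra.
Qed.

Lemma inner_sym {n} (a b : vec n) : inner a b = inner b a.
Proof. unfold inner; apply fsum_ext; intros; ring. Qed.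

Lemma inner_add_l {n} (a b c : vec n) : inner (vadd a b) c = inner a c + inner b c.
Proof. unfold inner, vadd. rewrite <- fsum_plus; apply fsum_ext; intros; ring. Qed.

Lemma inner_scal_l {n} t (a c : vec n) : inner (vscal t a) c = t * inner a c.
Proof. unfold inner, vscal. rewrite <- fsum_scal; apply fsum_ext; intros; ring. Qed.

Lemma inner_sub_l {n} (a b c : vec n) : inner (vsub a b) c = inner a c - inner b c.
Proof.
  replace (vsub a b) with (vadd a (vscal (-1) b))
    by (apply vec_ext; intro i; unfold vsub, vadd, vscal; ring).
  rewrite inner_add_l, inner_scal_l; ring.
Qed.

Lemma inner_add_r {n} (a b c : vec n) : inner c (vadd a b) = inner c a + inner c b.
Proof. rewrite !(inner_sym c); apply inner_add_l. Qed.

Lemma inner_sub_r {n} (a b c : vec n) : inner c (vsub a b) = inner c a - inner c b.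
Proof. rewrite !(inner_sym c); apply inner_sub_l. Qed.

Lemma inner_scal_r {n} t (a c : vec n) : inner c (vscal t a) = t * inner c a.
Proof. rewrite !(inner_sym c); apply inner_scal_l. Qed.

Lemma inner_self_nonneg {n} (a : vec n) : 0 <= inner a a.
Proof. unfold inner; apply fsum_nonneg; intros; nra. Qed.

Lemma inner_vsub_swap {n} (g a b : vec n) : inner g (vsub a b) = - inner g (vsub b a).
Proof. rewrite !inner_sub_r; ring. Qed.

Lemma inner_sub_scal_self {n} (a b : vec n) t :
  inner (vsub a (vscal t b)) (vsub a (vscal t b)) = inner a a - 2 * t * inner b a + t ^ 2 * inner b b.
Proof. rewrite !inner_sub_l, !inner_sub_r, !inner_scal_l, !inner_scal_r, (inner_sym a b). ring. Qed.

Lemma Cauchy_Schwarz_sq n (a b : vec n) : (inner a b) ^ 2 <= inner a a * inner b b.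
Proof.
  unfold inner. revert a b; induction n; simpl; intros a b; [lra|].
  specialize (IHn (fun i => a (Fin.FS i)) (fun i => b (Fin.FS i))).
  pose proof (fsum_nonneg n (fun i => a (Fin.FS i) * a (Fin.FS i)) ltac:(intros; nra)).
  pose proof (fsum_nonneg n (fun i => b (Fin.FS i) * b (Fin.FS i)) ltac:(intros; nra)).
  set (s := fsum n (fun i => a (Fin.FS i) * b (Fin.FS i))) in *.
  set (A := fsum n (fun i => a (Fin.FS i) * a (Fin.FS i))) in *.
  set (B := fsum n (fun i => b (Fin.FS i) * b (Fin.FS i))) in *.
  set (u := a Fin.F1); set (v := b Fin.F1).
  (* the cross term [2 u v s] is dominated by [u^2 B + v^2 A] because [s^2 <= A B] *)
  assert (Hcross : 2 * u * v * s <= u * u * B + v * v * A).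
  { assert ((u * u * B + v * v * A) ^ 2 - (2 * u * v * s) ^ 2
            = (u * u * B - v * v * A) ^ 2 + 4 * (u * v) ^ 2 * (A * B - s ^ 2)) by ring.
    assert (0 <= (u * v) ^ 2 * (A * B - s ^ 2)) by (apply Rmult_le_pos; nra).
    pose proof (pow2_ge_0 (u * u * B - v * v * A)).
    assert (0 <= u * u * B + v * v * A) by nra.
    nra. }
  nra.
Qed.

Lemma norm_sq {n} (a : vec n) : norm a ^ 2 = inner a a.
Proof. unfold norm. simpl. rewrite Rmult_1_r. apply sqrt_sqrt, inner_self_nonneg. Qed.

Lemma norm_nonneg {n} (a : vec n) : 0 <= norm a.
Proof. apply sqrt_pos. Qed.

Lemma norm_le_of_sq_le {n} (a : vec n) B : 0 <= B -> norm a ^ 2 <= B ^ 2 -> norm a <= B.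
Proof. intros; pose proof (norm_nonneg a); nra. Qed.

Lemma Cauchy_Schwarz {n} (a b : vec n) : inner a b <= norm a * norm b.
Proof.
  pose proof (Cauchy_Schwarz_sq n a b) as H. rewrite <- (norm_sq a), <- (norm_sq b) in H.
  pose proof (norm_nonneg a); pose proof (norm_nonneg b).
  assert (0 <= norm a * norm b) by nra. nra.
Qed.

Lemma norm_triangle {n} (a b : vec n) : norm (vadd a b) <= norm a + norm b.
Proof.
  pose proof (norm_nonneg a); pose proof (norm_nonneg b).
  apply norm_le_of_sq_le; [lra|].
  rewrite norm_sq, inner_add_l, !inner_add_r, (inner_sym b a), <- (norm_sq a), <- (norm_sq b).
  pose proof (Cauchy_Schwarz a b). nra.
Qed.

Lemma norm_scal {n} t (a : vec n) : norm (vscal t a) = Rabs t * norm a.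
Proof.
  unfold norm. rewrite inner_scal_l, inner_scal_r, <- Rmult_assoc, sqrt_mult_alt by nra.
  rewrite <- sqrt_Rsqr_abs. reflexivity.
Qed.

Lemma norm_sub_le {n} (a b : vec n) : norm (vsub a b) <= norm a + norm b.
Proof.
  replace (vsub a b) with (vadd a (vscal (-1) b))
    by (apply vec_ext; intro i; unfold vsub, vadd, vscal; ring).
  eapply Rle_trans; [apply norm_triangle|].
  rewrite norm_scal, (Rabs_left (-1)) by lra. lra.
Qed.

Lemma vsub_telescope {n} (a b c : vec n) : vsub a c = vadd (vsub a b) (vsub b c).
Proof. apply vec_ext; intro i; unfold vsub, vadd; ring. Qed.

(** * Subgradients of convex functions *)

Lemma convex_three_slope (phi : R -> R) a b :
  (forall a b t, 0 <= t <= 1 -> phi (t * a + (1 - t) * b) <= t * phi a + (1 - t) * phi b) ->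
  a < 0 -> 0 < b -> b * (phi a - phi 0) >= a * (phi b - phi 0).
Proof.
  intros Hc Ha Hb. set (t := b / (b - a)).
  assert (Ht : 0 <= t <= 1).
  { unfold t; split; [apply Rmult_le_pos; [lra | left; apply Rinv_0_lt_compat; lra]|].
    apply (Rmult_le_reg_r (b - a)); [lra|]. unfold Rdiv; rewrite Rmult_assoc, Rinv_l; lra. }
  pose proof (Hc a b t Ht) as H.
  replace (t * a + (1 - t) * b) with 0 in H by (unfold t; field; lra).
  assert (Hmul : (b - a) * phi 0 <= (b - a) * (t * phi a + (1 - t) * phi b))
    by (apply Rmult_le_compat_l; lra).
  replace ((b - a) * (t * phi a + (1 - t) * phi b)) with (b * phi a - a * phi b) in Hmul
    by (unfold t; field; lra).
  lra.
Qed.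

(* The supporting slope at [0] is the supremum of the slopes of chords to the left of [0]. *)
Lemma convex_slope_at_zero (phi : R -> R) :
  (forall a b t, 0 <= t <= 1 -> phi (t * a + (1 - t) * b) <= t * phi a + (1 - t) * phi b) ->
  exists c, forall b, phi b >= phi 0 + c * b.
Proof.
  intros Hc.
  set (E := fun s => exists a, a < 0 /\ s = (phi a - phi 0) / a).
  assert (Hb : bound E).
  { exists (phi 1 - phi 0). intros s [a [Ha ->]].
    pose proof (convex_three_slope phi a 1 Hc Ha ltac:(lra)).
    apply (Rmult_le_reg_r (- a)); [lra|].
    replace ((phi a - phi 0) / a * - a) with (- (phi a - phi 0)) by (field; lra). lra. }
  assert (Hne : exists s, E s) by (exists ((phi (-1) - phi 0) / (-1)), (-1); split; [lra|auto]).
  destruct (completeness E Hb Hne) as [c [Hup Hlub]].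
  exists c. intros b.
  destruct (Rtotal_order b 0) as [Hb0|[->|Hb0]]; [| lra |].
  - assert ((phi b - phi 0) / b <= c) by (apply Hup; exists b; auto).
    assert (phi b - phi 0 = (phi b - phi 0) / b * b) by (field; lra).
    nra.
  - assert ((phi b - phi 0) / b >= c).
    { apply Rle_ge, Hlub. intros s [a [Ha ->]].
      pose proof (convex_three_slope phi a b Hc Ha Hb0).
      apply (Rmult_le_reg_r (- a * b)); [nra|].
      replace ((phi a - phi 0) / a * (- a * b)) with (- (b * (phi a - phi 0))) by (field; lra).
      replace ((phi b - phi 0) / b * (- a * b)) with (- (a * (phi b - phi 0))) by (field; lra).
      lra. }
    assert (phi b - phi 0 = (phi b - phi 0) / b * b) by (field; lra).
    nra.
Qed.

Lemma partial_inf_convex {n} (F : R -> vec n -> R) (B : vec n -> R) :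
  (forall a w, B w <= F a w) ->
  (forall a1 a2 w1 w2 t, 0 <= t <= 1 ->
     F (t * a1 + (1 - t) * a2) (vadd (vscal t w1) (vscal (1 - t) w2))
       <= t * F a1 w1 + (1 - t) * F a2 w2) ->
  exists F', convex_fun F' /\ (forall a w, F' w <= F a w) /\
             (forall w L, (forall a, L <= F a w) -> L <= F' w).
Proof.
  intros Hlow Hconv.
  set (E := fun w z => exists a, z = - F a w).
  assert (Hb : forall w, bound (E w)).
  { intro w; exists (- B w); intros z [a ->]; specialize (Hlow a w); lra. }
  assert (Hne : forall w, exists z, E w z) by (intro w; exists (- F 0 w), 0; reflexivity).
  set (F' := fun w => - proj1_sig (completeness (E w) (Hb w) (Hne w))).
  assert (Hlub : forall w, is_lub (E w) (- F' w)).
  { intro w; unfold F'; rewrite Ropp_involutive; apply proj2_sig. }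
  assert (Hle : forall a w, F' w <= F a w).
  { intros a w. destruct (Hlub w) as [Hu _].
    specialize (Hu (- F a w) (ex_intro _ a eq_refl)). lra. }
  assert (Hglb : forall w L, (forall a, L <= F a w) -> L <= F' w).
  { intros w L HL. destruct (Hlub w) as [_ Hl].
    enough (- F' w <= - L) by lra.
    apply Hl. intros z [a ->]. specialize (HL a). lra. }
  assert (Happrox : forall w eps, 0 < eps -> exists a, F a w < F' w + eps).
  { intros w eps He. apply not_all_not_ex. intro Hn.
    assert (F' w + eps <= F' w) by (apply Hglb; intro a; apply Rnot_lt_le, Hn). lra. }
  exists F'. split; [|split; assumption].
  intros w1 w2 t Ht. apply Rnot_lt_le; intro Hlt.
  set (eps := (F' (vadd (vscal t w1) (vscal (1 - t) w2)) - (t * F' w1 + (1 - t) * F' w2)) / 2).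
  destruct (Happrox w1 eps ltac:(unfold eps; lra)) as [a1 Ha1].
  destruct (Happrox w2 eps ltac:(unfold eps; lra)) as [a2 Ha2].
  pose proof (Hle (t * a1 + (1 - t) * a2) (vadd (vscal t w1) (vscal (1 - t) w2))).
  pose proof (Hconv a1 a2 w1 w2 t Ht).
  assert (t * F a1 w1 <= t * (F' w1 + eps)) by (apply Rmult_le_compat_l; lra).
  assert ((1 - t) * F a2 w2 <= (1 - t) * (F' w2 + eps)) by (apply Rmult_le_compat_l; lra).
  unfold eps in *. lra.
Qed.

Definition vcons {n} (a : R) (w : vec n) : vec (S n) := fun i => Fin.caseS' i (fun _ => R) a w.
Definition vtail {n} (y : vec (S n)) : vec n := fun j => y (Fin.FS j).

Lemma vcons_eta {n} (y : vec (S n)) : y = vcons (y Fin.F1) (vtail y).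
Proof. apply vec_ext; intro i; pattern i; apply Fin.caseS'; reflexivity. Qed.

Lemma vcons_convex_comb {n} t a1 a2 (w1 w2 : vec n) :
  vadd (vscal t (vcons a1 w1)) (vscal (1 - t) (vcons a2 w2)) =
  vcons (t * a1 + (1 - t) * a2) (vadd (vscal t w1) (vscal (1 - t) w2)).
Proof. apply vec_ext; intro i; pattern i; apply Fin.caseS'; reflexivity. Qed.

Lemma inner_vcons {n} c (g : vec n) (y : vec (S n)) :
  inner (vcons c g) y = c * y Fin.F1 + inner g (vtail y).
Proof. reflexivity. Qed.

(* Induction on the dimension: split off the first coordinate, take a supporting slope [c]
   of the restriction to the first axis, and apply the induction hypothesis to the
   partial infimum over the first coordinate of [F (a, w) - c a]. *)
Lemma convex_supporting_at_zero n (F : vec n -> R) :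
  convex_fun F -> exists g, forall y, F y >= F vzero + inner g y.
Proof.
  revert F; induction n as [|n IH]; intros F HF.
  { exists vzero. intro y.
    rewrite (vec_ext y vzero) by (intro i; exact (Fin.case0 (fun i => y i = vzero i) i)). unfold inner; simpl; lra. }
  set (phi := fun a => F (vcons a vzero)).
  destruct (convex_slope_at_zero phi) as [c Hc].
  { intros a b t Ht. unfold phi.
    replace (vcons (t * a + (1 - t) * b) vzero)
      with (vadd (vscal t (vcons a (@vzero n))) (vscal (1 - t) (vcons b vzero))).
    - apply HF; auto.
    - rewrite vcons_convex_comb. f_equal. apply vec_ext; intro j; unfold vadd, vscal, vzero; ring. }
  set (Fa := fun a w => F (vcons a w) - c * a).
  destruct (partial_inf_convex Fa (fun w => 2 * phi 0 - F (vcons 0 (vscal (-1) w))))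
    as [F' [HF' [Hle Hglb]]].
  { intros b w. set (a := b / 2).
    pose proof (HF (vcons (2 * a) w) (vcons 0 (vscal (-1) w)) (1 / 2) ltac:(lra)) as H.
    replace (vadd (vscal (1 / 2) (vcons (2 * a) w)) (vscal (1 - 1 / 2) (vcons 0 (vscal (-1) w))))
      with (vcons a (@vzero n)) in H.
    2: { rewrite vcons_convex_comb. f_equal; [field|].
         apply vec_ext; intro j; unfold vadd, vscal, vzero; field. }
    specialize (Hc a). fold (phi a) in H. unfold Fa.
    replace (2 * a) with b in H by (unfold a; field). unfold a in *. lra. }
  { intros a1 a2 w1 w2 t Ht. unfold Fa. rewrite <- vcons_convex_comb.
    pose proof (HF (vcons a1 w1) (vcons a2 w2) t Ht). lra. }
  destruct (IH F' HF') as [g' Hg'].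
  assert (HF'0 : phi 0 <= F' vzero).
  { apply Hglb. intro a. specialize (Hc a). unfold Fa. fold (phi a). lra. }
  exists (vcons c g'). intros y.
  rewrite inner_vcons.
  replace (F vzero) with (phi 0)
    by (unfold phi; f_equal; apply vec_ext; intro i; pattern i; apply Fin.caseS'; reflexivity).
  rewrite (vcons_eta y) at 1.
  specialize (Hg' (vtail y)). specialize (Hle (y Fin.F1) (vtail y)). unfold Fa in Hle. lra.
Qed.

Lemma subgrad_exists n (F : vec n -> R) : convex_fun F -> forall x, exists g, subgrad F x g.
Proof.
  intros HF x. set (Fx := fun y => F (vadd x y)).
  destruct (convex_supporting_at_zero n Fx) as [g Hg].
  { intros a b t Ht. unfold Fx.
    replace (vadd x (vadd (vscal t a) (vscal (1 - t) b)))
      with (vadd (vscal t (vadd x a)) (vscal (1 - t) (vadd x b)))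
      by (apply vec_ext; intro i; unfold vadd, vscal; ring).
    apply HF; auto. }
  exists g. intros y. specialize (Hg (vsub y x)). unfold Fx in Hg.
  replace (vadd x (vsub y x)) with y in Hg by (apply vec_ext; intro i; unfold vadd, vsub; ring).
  replace (vadd x vzero) with x in Hg by (apply vec_ext; intro i; unfold vadd, vzero; ring).
  exact Hg.
Qed.

Lemma subgrad_le {n} (F : vec n -> R) z g y :
  subgrad F z g -> F z - F y <= inner g (vsub z y).
Proof. intros Hg. specialize (Hg y). rewrite inner_vsub_swap in Hg. lra. Qed.

Lemma subgrad_bounded_lipschitz {n} (X : vec n -> Prop) (F : vec n -> R) C a b :
  convex_fun F -> (forall y g, X y -> subgrad F y g -> norm g <= C) -> X b ->
  F b - F a <= C * norm (vsub a b).
Proof.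
  intros HF HC Hb. destruct (subgrad_exists n F HF b) as [g Hg].
  pose proof (subgrad_le F b g a Hg). pose proof (HC b g Hb Hg).
  pose proof (Cauchy_Schwarz g (vsub b a)).
  replace (vsub b a) with (vscal (-1) (vsub a b)) in *
    by (apply vec_ext; intro i; unfold vsub, vscal; ring).
  rewrite norm_scal, (Rabs_left (-1)) in * by lra.
  pose proof (norm_nonneg (vsub a b)). nra.
Qed.

(** * Projection onto a convex set *)

(* Variational characterisation: moving from [p] towards [y] inside [X] cannot bring [z]
   closer, which forces the angle at [p] between [z] and [y] to be obtuse. *)
Lemma proj_obtuse {n} (X : vec n -> Prop) z p y :
  convex_set X -> is_proj X z p -> X y -> inner (vsub z p) (vsub y p) <= 0.
Proof.
  intros Hc [Hp Hmin] Hy.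
  set (A := vsub z p). set (B := vsub y p).
  assert (Hsmall : forall t, 0 < t <= 1 -> 2 * inner B A <= t * inner B B).
  { intros t Ht. set (q := vadd (vscal t y) (vscal (1 - t) p)).
    pose proof (Hmin q (Hc y p t Hy Hp ltac:(lra))) as H.
    assert (H2 : norm (vsub z p) ^ 2 <= norm (vsub z q) ^ 2)
      by (pose proof (norm_nonneg (vsub z p)); nra).
    replace (vsub z q) with (vsub A (vscal t B)) in H2
      by (apply vec_ext; intro i; unfold A, B, q, vsub, vadd, vscal; ring).
    fold A in H2. rewrite !norm_sq, inner_sub_scal_self in H2.
    nra. }
  rewrite inner_sym. fold A B.
  pose proof (inner_self_nonneg B).
  destruct (Rle_dec (inner B A) 0) as [|Hpos]; auto.
  set (t := inner B A / (inner B A + inner B B)).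
  assert (Ht : 0 < t <= 1).
  { unfold t; split; [apply Rdiv_lt_0_compat; lra|].
    apply (Rmult_le_reg_r (inner B A + inner B B)); [lra|].
    unfold Rdiv; rewrite Rmult_assoc, Rinv_l; lra. }
  pose proof (Hsmall t Ht).
  assert (t * inner B B <= inner B A).
  { unfold t. apply (Rmult_le_reg_r (inner B A + inner B B)); [lra|].
    replace (inner B A / (inner B A + inner B B) * inner B B * (inner B A + inner B B))
      with (inner B A * inner B B) by (field; lra).
    nra. }
  lra.
Qed.

Lemma proj_nonexpansive {n} (X : vec n -> Prop) z p y :
  convex_set X -> is_proj X z p -> X y -> norm (vsub p y) ^ 2 <= norm (vsub z y) ^ 2.
Proof.
  intros Hc Hp Hy. pose proof (proj_obtuse X z p y Hc Hp Hy) as Hobt.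
  rewrite !norm_sq, (vsub_telescope z p y), inner_add_l, !inner_add_r.
  replace (vsub p y) with (vscal (-1) (vsub y p))
    by (apply vec_ext; intro i; unfold vsub, vscal; ring).
  rewrite !inner_scal_l, !inner_scal_r, (inner_sym (vsub y p) (vsub z p)).
  pose proof (inner_self_nonneg (vsub z p)). nra.
Qed.

Lemma proj_step_sq_dist {n} (X : vec n -> Prop) z v p y t :
  convex_set X -> is_proj X (vsub z (vscal t v)) p -> X y ->
  norm (vsub p y) ^ 2 <= norm (vsub z y) ^ 2 - 2 * t * inner v (vsub z y) + t ^ 2 * norm v ^ 2.
Proof.
  intros Hc Hp Hy. pose proof (proj_nonexpansive X _ p y Hc Hp Hy) as H.
  replace (vsub (vsub z (vscal t v)) y) with (vsub (vsub z y) (vscal t v)) in H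
    by (apply vec_ext; intro i; unfold vsub, vscal; ring).
  rewrite !norm_sq, inner_sub_scal_self in H. rewrite !norm_sq. exact H.
Qed.

Lemma proj_step_len {n} (X : vec n -> Prop) z v p t :
  convex_set X -> is_proj X (vsub z (vscal t v)) p -> X z -> 0 <= t ->
  norm (vsub p z) <= t * norm v.
Proof.
  intros Hc Hp Hz Ht. pose proof (proj_nonexpansive X _ p z Hc Hp Hz) as H.
  replace (vsub (vsub z (vscal t v)) z) with (vscal (- t) v) in H
    by (apply vec_ext; intro i; unfold vsub, vscal; ring).
  rewrite norm_scal, Rabs_Ropp, Rabs_pos_eq in H by lra.
  apply norm_le_of_sq_le; [pose proof (norm_nonneg v); nra | lra].
Qed.

(** * Finite sums *)

Lemma rsum_ext N a b : (forall k, (k < N)%nat -> a k = b k) -> rsum N a = rsum N b.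
Proof. induction N; simpl; intros; auto. rewrite IHN, H; auto. Qed.

Lemma rsum_plus N a b : rsum N (fun k => a k + b k) = rsum N a + rsum N b.
Proof. induction N; simpl; [lra|]. rewrite IHN; ring. Qed.

Lemma rsum_minus N a b : rsum N (fun k => a k - b k) = rsum N a - rsum N b.
Proof. induction N; simpl; [lra|]. rewrite IHN; ring. Qed.

Lemma rsum_scal N c a : rsum N (fun k => c * a k) = c * rsum N a.
Proof. induction N; simpl; [lra|]. rewrite IHN; ring. Qed.

Lemma rsum_le N a b : (forall k, (k < N)%nat -> a k <= b k) -> rsum N a <= rsum N b.
Proof.
  induction N; simpl; intros H; [lra|].
  pose proof (H N ltac:(lia)). pose proof (IHN ltac:(intros; apply H; lia)). lra.
Qed.

Lemma rsum_pos N a : (1 <= N)%nat -> (forall k, 0 < a k) -> 0 < rsum N a.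
Proof.
  intros HN Ha. induction N as [|[|N] IH]; simpl in *; [lia | pose proof (Ha 0%nat); lra |].
  pose proof (IH ltac:(lia)). pose proof (Ha (S N)). lra.
Qed.

Lemma convex_rsum {n} (fs : nat -> vec n -> R) K :
  (forall i, (i < K)%nat -> convex_fun (fs i)) -> convex_fun (fun y => rsum K (fun i => fs i y)).
Proof.
  induction K; intros H x y t Ht; simpl; [lra|].
  pose proof (IHK ltac:(intros; apply H; lia) x y t Ht).
  pose proof (H K ltac:(lia) x y t Ht). simpl in *. lra.
Qed.

Lemma jensen {n} (F : vec n -> R) (w : nat -> R) (u : nat -> vec n) N :
  convex_fun F -> (forall k, 0 < w k) -> (1 <= N)%nat ->
  F (vscal (/ rsum N w) (vsum N (fun k => vscal (w k) (u k))))
    <= / rsum N w * rsum N (fun k => w k * F (u k)).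
Proof.
  intros HF Hw HN. induction N as [|[|N] IH]; [lia| |].
  - pose proof (Hw 0%nat). simpl.
    replace (vscal (/ (0 + w 0%nat)) (vadd vzero (vscal (w 0%nat) (u 0%nat)))) with (u 0%nat)
      by (apply vec_ext; intro i; unfold vscal, vadd, vzero; field; lra).
    right; field; lra.
  - specialize (IH ltac:(lia)).
    set (S0 := rsum (S N) w) in *. set (wN := w (S N)).
    assert (HS0 : 0 < S0) by (apply rsum_pos; auto; lia).
    pose proof (Hw (S N)) as HwN; fold wN in HwN.
    change (rsum (S (S N)) w) with (S0 + wN).
    change (rsum (S (S N)) (fun k => w k * F (u k)))
      with (rsum (S N) (fun k => w k * F (u k)) + wN * F (u (S N))).
    set (xb := vscal (/ S0) (vsum (S N) (fun k => vscal (w k) (u k)))) in *.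
    set (t := S0 / (S0 + wN)).
    assert (Ht : 0 <= t <= 1).
    { unfold t; split; [apply Rmult_le_pos; [lra | left; apply Rinv_0_lt_compat; lra]|].
      apply (Rmult_le_reg_r (S0 + wN)); [lra|]. unfold Rdiv; rewrite Rmult_assoc, Rinv_l; lra. }
    replace (vscal (/ (S0 + wN)) (vsum (S (S N)) (fun k => vscal (w k) (u k))))
      with (vadd (vscal t xb) (vscal (1 - t) (u (S N)))).
    2: { apply vec_ext; intro i. unfold xb, t. simpl vsum. unfold vscal, vadd. fold wN. field. lra. }
    eapply Rle_trans; [apply HF; auto|].
    assert (S0 * F xb <= rsum (S N) (fun k => w k * F (u k))).
    { apply (Rmult_le_compat_l S0) in IH; [|lra]. rewrite <- Rmult_assoc, Rinv_r in IH; lra. }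
    apply (Rmult_le_reg_l (S0 + wN)); [lra|].
    replace ((S0 + wN) * (t * F xb + (1 - t) * F (u (S N)))) with (S0 * F xb + wN * F (u (S N)))
      by (unfold t; field; lra).
    rewrite <- Rmult_assoc, Rinv_r, Rmult_1_l by lra. lra.
Qed.

Lemma weighted_telescope_le (a D : nat -> R) B N : (1 <= N)%nat ->
  (forall k, 0 <= a k) -> (forall k, a k <= a (S k)) -> (forall k, 0 <= D k <= B) ->
  rsum N (fun k => a k * (D k - D (S k))) <= a (N - 1)%nat * B.
Proof.
  intros HN Ha Hinc HD.
  enough (Hgen : rsum N (fun k => a k * (D k - D (S k))) <= a (N - 1)%nat * (B - D N)).
  { pose proof (HD N); pose proof (Ha (N - 1)%nat). nra. }
  induction N as [|[|N] IH]; [lia| |].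
  - simpl. pose proof (HD 0%nat). pose proof (Ha 0%nat). nra.
  - specialize (IH ltac:(lia)). simpl rsum. simpl in IH |- *. rewrite Nat.sub_0_r in *.
    pose proof (HD (S N)); pose proof (Hinc N); pose proof (Ha (S N)).
    assert (a N * (B - D (S N)) <= a (S N) * (B - D (S N))) by nra. nra.
Qed.

Lemma Rpower_antitone_neg g1 g2 s : 0 < g1 -> g1 <= g2 -> s < 0 -> Rpower g2 s <= Rpower g1 s.
Proof.
  intros H1 H2 Hs. replace s with (- (- s)) by ring. rewrite (Rpower_Ropp g2 (- s)), (Rpower_Ropp g1 (- s)).
  apply Rinv_le_contravar; [apply exp_pos|]. apply Rle_Rpower_l; lra.
Qed.

Lemma Rpower_plus_INR g s k : 0 < g -> Rpower g (s + INR k) = Rpower g s * g ^ k.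
Proof. intros Hg. rewrite Rpower_plus, Rpower_pow; auto. Qed.

(** * Analysis of the IR-IG iteration *)

Section IRIG.

Variables (n m : nat) (X : vec n -> Prop) (fs : nat -> vec n -> R) (h : vec n -> R).
Variables (Cf Ch Mh : R) (gamma lambda : nat -> R) (x gf gh : nat -> nat -> vec n).

Hypothesis m_pos : (1 <= m)%nat.
Hypothesis X_convex : convex_set X.
Hypothesis fs_convex : forall i, (i < m)%nat -> convex_fun (fs i).
Hypothesis fs_subgrad_bound :
  forall i y g, (i < m)%nat -> X y -> subgrad (fs i) y g -> norm g <= Cf.
Hypothesis h_subgrad_bound : forall y g, X y -> subgrad h y g -> norm g <= Ch.
Hypothesis h_bound : forall y, X y -> Rabs (h y) <= Mh.
Hypothesis gamma_pos : forall k, gamma k > 0.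
Hypothesis lambda_pos : forall k, lambda k > 0.
Hypothesis x_init : X (x 0%nat 0%nat).
Hypothesis x_step : forall k i, (i < m)%nat ->
  subgrad (fs i) (x k i) (gf k i) /\ subgrad h (x k i) (gh k i) /\
  is_proj X (vsub (x k i) (vscal (gamma k) (vadd (gf k i) (vscal (lambda k / INR m) (gh k i)))))
    (x k (S i)).
Hypothesis x_cycle : forall k, x (S k) 0%nat = x k m.

Let f y := rsum m (fun i => fs i y).
Let c k := lambda k / INR m.
Let d k i := vadd (gf k i) (vscal (c k) (gh k i)).
Let G k := Cf + c k * Ch.

Lemma INR_m_ge1 : 1 <= INR m.
Proof. apply (le_INR 1); exact m_pos. Qed.

Lemma c_mul_m k : c k * INR m = lambda k.
Proof. pose proof INR_m_ge1. unfold c; field; lra. Qed.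

Lemma c_bounds k : 0 <= c k <= lambda k.
Proof.
  pose proof INR_m_ge1. pose proof (lambda_pos k). pose proof (c_mul_m k).
  unfold c in *. split; [apply Rmult_le_pos; [lra | left; apply Rinv_0_lt_compat; lra]|]. nra.
Qed.

Lemma iterate_in_X k i : (i <= m)%nat -> X (x k i).
Proof.
  revert i; induction k as [|k IHk]; intros [|i] Hi.
  - exact x_init.
  - apply (x_step 0 i ltac:(lia)).
  - rewrite x_cycle. apply IHk; lia.
  - apply (x_step (S k) i ltac:(lia)).
Qed.

Lemma Cf_nonneg : 0 <= Cf.
Proof.
  destruct (x_step 0 0 ltac:(lia)) as [Hg _].
  pose proof (fs_subgrad_bound 0 _ _ ltac:(lia) (iterate_in_X 0 0 ltac:(lia)) Hg).
  pose proof (norm_nonneg (gf 0%nat 0%nat)). lra.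
Qed.

Lemma Ch_nonneg : 0 <= Ch.
Proof.
  destruct (x_step 0 0 ltac:(lia)) as [_ [Hg _]].
  pose proof (h_subgrad_bound _ _ (iterate_in_X 0 0 ltac:(lia)) Hg).
  pose proof (norm_nonneg (gh 0%nat 0%nat)). lra.
Qed.

Lemma direction_norm_le k i : (i < m)%nat -> norm (d k i) <= G k.
Proof.
  intros Hi. destruct (x_step k i Hi) as [Hf [Hh _]].
  pose proof (fs_subgrad_bound i _ _ Hi (iterate_in_X k i ltac:(lia)) Hf).
  pose proof (h_subgrad_bound _ _ (iterate_in_X k i ltac:(lia)) Hh).
  pose proof (c_bounds k).
  unfold d, G. eapply Rle_trans; [apply norm_triangle|].
  rewrite norm_scal, Rabs_pos_eq by lra. nra.
Qed.

Lemma iterate_drift_le k i : (i <= m)%nat -> norm (vsub (x k i) (x k 0)) <= INR i * gamma k * G k.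
Proof.
  induction i as [|i IH]; intros Hi.
  - replace (vsub (x k 0%nat) (x k 0%nat)) with (vscal 0 (x k 0%nat))
      by (apply vec_ext; intro j; unfold vsub, vscal; ring).
    rewrite norm_scal, Rabs_R0. simpl; lra.
  - destruct (x_step k i ltac:(lia)) as [_ [_ Hp]].
    pose proof (proj_step_len X _ _ _ _ X_convex Hp (iterate_in_X k i ltac:(lia))
                  (Rlt_le _ _ (gamma_pos k))).
    pose proof (direction_norm_le k i ltac:(lia)). pose proof (gamma_pos k).
    rewrite (vsub_telescope _ (x k i)), S_INR.
    eapply Rle_trans; [apply norm_triangle|]. specialize (IH ltac:(lia)). fold (c k) (d k i) in *.
    nra.
Qed.

Lemma inner_iterate_descent k i y : X y -> (i < m)%nat ->
  norm (vsub (x k (S i)) y) ^ 2 <= norm (vsub (x k i) y) ^ 2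
    - 2 * gamma k * (fs i (x k 0%nat) - fs i y)
    + (2 * gamma k * Cf * (INR m * gamma k * G k) + 4 * gamma k * c k * Mh + gamma k ^ 2 * G k ^ 2).
Proof.
  intros Hy Hi. destruct (x_step k i Hi) as [Hf [Hh Hp]].
  pose proof (iterate_in_X k i ltac:(lia)) as Hxi.
  pose proof (proj_step_sq_dist X _ _ _ y _ X_convex Hp Hy) as Hproj. fold (c k) (d k i) in Hproj.
  assert (Hinner : fs i (x k i) - fs i y - 2 * c k * Mh <= inner (d k i) (vsub (x k i) y)).
  { unfold d. rewrite inner_add_l, inner_scal_l.
    pose proof (subgrad_le _ _ _ y Hf). pose proof (subgrad_le _ _ _ y Hh).
    pose proof (h_bound _ Hy). pose proof (h_bound _ Hxi).
    pose proof (Rle_abs (h y)). pose proof (Rle_abs (- h (x k i))). rewrite Rabs_Ropp in *.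
    pose proof (c_bounds k). nra. }
  assert (Hlin : fs i (x k 0%nat) - fs i (x k i) <= Cf * (INR m * gamma k * G k)).
  { pose proof (subgrad_bounded_lipschitz X (fs i) Cf (x k i) (x k 0%nat) (fs_convex i Hi)
                  (fun y g => fs_subgrad_bound i y g Hi) (iterate_in_X k 0 ltac:(lia))).
    pose proof (iterate_drift_le k i ltac:(lia)).
    assert (INR i <= INR m) by (apply le_INR; lia).
    pose proof Cf_nonneg. pose proof (gamma_pos k).
    assert (0 <= G k) by (pose proof Ch_nonneg; pose proof (c_bounds k); unfold G; nra).
    assert (INR i * gamma k * G k <= INR m * gamma k * G k)
      by (apply Rmult_le_compat_r; [lra|]; apply Rmult_le_compat_r; lra).
    nra. }
  assert (Hdir : norm (d k i) ^ 2 <= G k ^ 2).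
  { pose proof (direction_norm_le k i Hi). pose proof (norm_nonneg (d k i)). nra. }
  pose proof (gamma_pos k). nra.
Qed.

Lemma cycle_descent k y : X y ->
  2 * gamma k * (f (x k 0%nat) - f y) <=
    norm (vsub (x k 0%nat) y) ^ 2 - norm (vsub (x (S k) 0%nat) y) ^ 2
    + 2 * INR m * gamma k ^ 2 * (Cf ^ 2 + lambda k ^ 2 * Ch ^ 2)
    + 2 * INR m ^ 2 * Cf * gamma k ^ 2 * (Cf + lambda k * Ch)
    + 4 * gamma k * lambda k * Mh.
Proof.
  intros Hy.
  set (Q := 2 * gamma k * Cf * (INR m * gamma k * G k) + 4 * gamma k * c k * Mh
            + gamma k ^ 2 * G k ^ 2).
  assert (Hpartial : forall j, (j <= m)%nat ->
    norm (vsub (x k j) y) ^ 2 <= norm (vsub (x k 0%nat) y) ^ 2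
      - 2 * gamma k * rsum j (fun i => fs i (x k 0%nat) - fs i y) + INR j * Q).
  { induction j as [|j IH]; intros Hj; simpl rsum; [simpl; lra|].
    pose proof (inner_iterate_descent k j y Hy ltac:(lia)) as Hstep. fold Q in Hstep.
    specialize (IH ltac:(lia)). rewrite S_INR. lra. }
  specialize (Hpartial m (le_n m)).
  rewrite rsum_minus, <- x_cycle in Hpartial. fold (f (x k 0%nat)) (f y) in Hpartial.
  pose proof INR_m_ge1. pose proof Cf_nonneg. pose proof Ch_nonneg.
  pose proof (c_bounds k). pose proof (c_mul_m k). pose proof (gamma_pos k).
  assert (HG : 0 <= G k <= Cf + lambda k * Ch) by (unfold G; split; nra).
  assert (HG2 : G k ^ 2 <= 2 * (Cf ^ 2 + lambda k ^ 2 * Ch ^ 2)).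
  { assert (c k ^ 2 * Ch ^ 2 <= lambda k ^ 2 * Ch ^ 2) by (apply Rmult_le_compat_r; nra).
    pose proof (pow2_ge_0 (Cf - c k * Ch)). unfold G. nra. }
  assert (HQ : INR m * Q <= 2 * INR m * gamma k ^ 2 * (Cf ^ 2 + lambda k ^ 2 * Ch ^ 2)
                 + 2 * INR m ^ 2 * Cf * gamma k ^ 2 * (Cf + lambda k * Ch)
                 + 4 * gamma k * lambda k * Mh).
  { unfold Q.
    assert (0 <= INR m ^ 2 * Cf * gamma k ^ 2) by (apply Rmult_le_pos; [nra|]; nra).
    assert (0 <= INR m * gamma k ^ 2) by nra.
    assert (INR m * (4 * gamma k * c k * Mh) = 4 * gamma k * lambda k * Mh)
      by (rewrite <- (c_mul_m k); ring).
    nra. }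
  lra.
Qed.

Lemma weighted_gap_sum_le y r M N :
  X y -> r < 1 -> (forall k, gamma (S k) <= gamma k) -> (forall z, X z -> norm z <= M) ->
  (1 <= N)%nat ->
  rsum N (fun k => Rpower (gamma k) r * (f (x k 0%nat) - f y)) <=
    INR m * rsum N (fun k => Rpower (gamma k) (r + 1) * (Cf ^ 2 + lambda k ^ 2 * Ch ^ 2))
    + INR m ^ 2 * Cf * rsum N (fun k => Rpower (gamma k) (r + 1) * (Cf + lambda k * Ch))
    + 2 * Mh * rsum N (fun k => Rpower (gamma k) r * lambda k)
    + 2 * M ^ 2 * Rpower (gamma (N - 1)%nat) (r - 1).
Proof.
  intros Hy Hr Hdec HM HN.
  set (P := fun k => Rpower (gamma k) (r - 1)).
  set (D := fun k => norm (vsub (x k 0%nat) y) ^ 2).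
  assert (HP : forall k, 0 < P k) by (intro; apply exp_pos).
  assert (Hpow : forall k, Rpower (gamma k) r = P k * gamma k ^ 1
                           /\ Rpower (gamma k) (r + 1) = P k * gamma k ^ 2).
  { intro k. unfold P. rewrite <- !Rpower_plus_INR by apply gamma_pos.
    split; f_equal; simpl; ring. }
  assert (Hk : forall k, (k < N)%nat ->
    Rpower (gamma k) r * (f (x k 0%nat) - f y) <= P k / 2 * (D k - D (S k))
      + (INR m * (Rpower (gamma k) (r + 1) * (Cf ^ 2 + lambda k ^ 2 * Ch ^ 2))
         + INR m ^ 2 * Cf * (Rpower (gamma k) (r + 1) * (Cf + lambda k * Ch))
         + 2 * Mh * (Rpower (gamma k) r * lambda k))).
  { intros k _. destruct (Hpow k) as [-> ->].
    pose proof (cycle_descent k y Hy) as H.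
    apply (Rmult_le_compat_l (P k / 2)) in H; [|pose proof (HP k); lra].
    unfold D. lra. }
  assert (Habel : rsum N (fun k => P k / 2 * (D k - D (S k))) <= P (N - 1)%nat / 2 * (4 * M ^ 2)).
  { apply weighted_telescope_le; auto.
    - intro k; pose proof (HP k); lra.
    - intro k. apply Rmult_le_compat_r; [lra|].
      apply Rpower_antitone_neg; [apply gamma_pos | apply Hdec | lra].
    - intro k. unfold D. split; [apply pow2_ge_0|].
      pose proof (norm_sub_le (x k 0%nat) y). pose proof (norm_nonneg (vsub (x k 0%nat) y)).
      pose proof (HM _ (iterate_in_X k 0 ltac:(lia))). pose proof (HM _ Hy). nra. }
  eapply Rle_trans; [apply rsum_le, Hk|].
  rewrite !rsum_plus, !rsum_scal. unfold P in *. lra.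
Qed.

Lemma average_gap_le y r M N :
  X y -> r < 1 -> (forall k, gamma (S k) <= gamma k) -> (forall z, X z -> norm z <= M) ->
  (1 <= N)%nat ->
  let S := rsum N (fun k => Rpower (gamma k) r) in
  let xbar := vscal (/ S) (vsum N (fun k => vscal (Rpower (gamma k) r) (x k 0%nat))) in
  f xbar - f y <=
    / S * ( INR m * rsum N (fun k => Rpower (gamma k) (r + 1) * (Cf ^ 2 + lambda k ^ 2 * Ch ^ 2))
          + INR m ^ 2 * Cf * rsum N (fun k => Rpower (gamma k) (r + 1) * (Cf + lambda k * Ch))
          + 2 * Mh * rsum N (fun k => Rpower (gamma k) r * lambda k)
          + 2 * M ^ 2 * Rpower (gamma (N - 1)%nat) (r - 1) ).
Proof.
  intros Hy Hr Hdec HM HN S xbar.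
  assert (HS : 0 < S) by (apply rsum_pos; auto; intro; apply exp_pos).
  pose proof (jensen f (fun k => Rpower (gamma k) r) (fun k => x k 0%nat) N
                (convex_rsum fs m fs_convex) (fun k => exp_pos _) HN) as Hjensen.
  cbv beta in Hjensen. fold S xbar in Hjensen.
  replace (rsum N (fun k => Rpower (gamma k) r * f (x k 0%nat)))
    with (rsum N (fun k => Rpower (gamma k) r * (f (x k 0%nat) - f y)) + f y * S) in Hjensen
    by (unfold S; rewrite <- rsum_scal, <- rsum_plus; apply rsum_ext; intros; ring).
  pose proof (weighted_gap_sum_le y r M N Hy Hr Hdec HM HN) as Hsum.
  apply (Rmult_le_compat_l (/ S)) in Hsum; [|left; apply Rinv_0_lt_compat; lra].
  rewrite Rmult_plus_distr_l in Hjensen.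
  replace (/ S * (f y * S)) with (f y) in Hjensen by (field; lra).
  lra.
Qed.

End IRIG.

Theorem lemma6
  (n m : nat) (X : vec n -> Prop) (fs : nat -> vec n -> R) (h : vec n -> R)
  (mu_h Cf Ch fstar r Mh M : R) (gamma lambda : nat -> R)
  (x : nat -> nat -> vec n) (gf gh : nat -> nat -> vec n) :
  (1 <= m)%nat ->
  (exists x0, X x0) -> convex_set X -> compact_set X ->
  (forall i, (i < m)%nat -> convex_fun (fs i)) ->
  mu_h > 0 -> strongly_convex h mu_h ->
  let f := fun y => rsum m (fun i => fs i y) in
  (exists y, X y /\ f y = fstar) -> (forall y, X y -> fstar <= f y) ->
  (forall i y g, (i < m)%nat -> X y -> subgrad (fs i) y g -> norm g <= Cf) ->
  (forall y g, X y -> subgrad h y g -> norm g <= Ch) ->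
  (forall k, gamma k > 0) -> (forall k, lambda k > 0) ->
  (forall k, gamma (S k) <= gamma k) -> (forall k, lambda (S k) <= lambda k) ->
  r < 1 ->
  X (x 0%nat 0%nat) ->
  (forall k i, (i < m)%nat ->
     subgrad (fs i) (x k i) (gf k i) /\ subgrad h (x k i) (gh k i) /\
     is_proj X
       (vsub (x k i) (vscal (gamma k)
          (vadd (gf k i) (vscal (lambda k / INR m) (gh k i)))))
       (x k (S i))) ->
  (forall k, x (S k) 0%nat = x k m) ->
  (forall y, X y -> Rabs (h y) <= Mh) ->
  (forall y, X y -> norm y <= M) ->
  forall N : nat, (1 <= N)%nat ->
  let S := rsum N (fun k => Rpower (gamma k) r) in
  let xbar := vscal (/ S) (vsum N (fun k => vscal (Rpower (gamma k) r) (x k 0%nat))) in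
  f xbar - fstar <=
    / S * ( INR m * rsum N (fun k => Rpower (gamma k) (r + 1) * (Cf ^ 2 + (lambda k) ^ 2 * Ch ^ 2))
          + (INR m) ^ 2 * Cf * rsum N (fun k => Rpower (gamma k) (r + 1) * (Cf + lambda k * Ch))
          + 2 * Mh * rsum N (fun k => Rpower (gamma k) r * lambda k)
          + 2 * M ^ 2 * Rpower (gamma (N - 1)%nat) (r - 1) ).
Proof.
  intros Hm _ HXc _ Hfs _ _ f [xs [Hxs <-]] _ HCf HCh Hg Hl Hgdec _ Hr Hx0 Hstep Hcycle
    HMh HM N HN S xbar.
  exact (average_gap_le n m X fs h Cf Ch Mh gamma lambda x gf gh Hm HXc Hfs HCf HCh HMh
           Hg Hl Hx0 Hstep Hcycle xs r M N Hxs Hr Hgdec HM HN).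
Qed.
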